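(* Let $G$ be a quadrangulation of order $n$ and radius $r$, and let $v$ be a central vertex of $G$. Writing $n_i=|N_i(v)|$, we have (i) $n_i \geq 2$ for $i\in \{1,2,r-2,r-1\}$, and (ii) $n_i \geq 4$ for $i\in \{3,4,\ldots,r-3\}$.
   Context: A quadrangulation is a maximal bipartite planar graph, considered with a plane embedding; equivalently, a simple connected plane bipartite graph in which every face is bounded by a cycle of length $4$. The eccentricity of a vertex $u$ is $e(u)=\max_{x\in V(G)} d_G(u,x)$; the radius $r$ of $G$ is the minimum eccentricity, and a central vertex is a vertex whose eccentricity equals the radius. $N_i(v)$ denotes the set of vertices at distance exactly $i$ from $v$. *)

From mathcomp Require Import all_boot.
Set Implicit Arguments. Unset Strict Implicit. Unset Printing Implicit Defensive.

(* A plane embedding is given combinatorially by a rotation system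
   (Heffter-Edmonds): rho u w is the neighbour of u following w in the cyclic
   order around u. *)

Section Graph.
Variable V : finType.
Variable adj : rel V.

Definition simple_graph : Prop :=
  (forall u, ~~ adj u u) /\ (forall u w, adj u w = adj w u).

Definition connected_graph : Prop := forall u w, connect adj u w.

Definition bipartite : Prop :=
  exists c : V -> bool, forall u w, adj u w -> c u != c w.

Definition dart (d : V * V) : bool := adj d.1 d.2.

Definition darts : {set V * V} := [set d | dart d].

Definition rotation_system (rho : V -> V -> V) : Prop :=
  forall u,
    (forall w, adj u w -> adj u (rho u w)) /\
    {in [pred w | adj u w] &, injective (rho u)} /\
    (forall w w', adj u w -> adj u w' -> exists k, iter k (rho u) w = w').

Definition face_perm (rho : V -> V -> V) (d : V * V) : V * V :=
  (d.2, rho d.2 d.1).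

Definition faces (rho : V -> V -> V) : {set {set V * V}} :=
  [set [set d' | fconnect (face_perm rho) d d'] | d in darts].

(* Euler's formula |V| - |E| + |F| = 2, with |E| = |darts| / 2, written
   without subtraction. *)
Definition spherical (rho : V -> V -> V) : Prop :=
  2 * #|V| + 2 * #|faces rho| = #|darts| + 4.

Definition quad_faces (rho : V -> V -> V) : Prop :=
  forall d, dart d ->
    let phi := face_perm rho in
    iter 4 phi d = d /\
    uniq [:: d.1; (phi d).1; (iter 2 phi d).1; (iter 3 phi d).1].

Definition quadrangulation (rho : V -> V -> V) : Prop :=
  simple_graph /\ connected_graph /\ bipartite /\
  rotation_system rho /\ spherical rho /\ quad_faces rho.

Fixpoint ball (k : nat) (u : V) : {set V} :=
  if k is k'.+1 then
    ball k' u :|: [set x | [exists y in ball k' u, adj y x]]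
  else [set u].

(* d_G(u,x) = least k with x in the k-ball around u (searched up to |V|,
   which suffices in a connected graph) *)
Definition dist (u x : V) : nat :=
  find (fun k => x \in ball k u) (iota 0 #|V|).

Definition ecc (u : V) : nat := \max_(x : V) dist u x.

Definition central (v : V) : Prop := forall w, ecc v <= ecc w.

Definition Nsphere (v : V) (i : nat) : {set V} := [set x | dist v x == i].

End Graph.

From mathcomp Require Import all_boot zify.
Set Implicit Arguments. Unset Strict Implicit. Unset Printing Implicit Defensive.

(* First, since G is bipartite every edge joins
   consecutive levels N_i(v), N_(i+1)(v); rotating around a vertex a of N_i
   from a neighbour in N_(i-1) to one in N_(i+1), some face contains a path
   x a y with x in N_(i-1) and y in N_(i+1), and its fourth vertex is a second
   vertex of N_i sharing the neighbour x with a and also having a neighbour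
   in N_(i+1).  This gives n_i >= 2 for 1 <= i <= r-1.  Second, if some
   n_i <= 3 with 3 <= i <= r-3, then either one vertex of N_(i-1) is adjacent
   to every vertex of N_i with a neighbour in N_(i+1), or some vertex of N_i is
   within distance 2 of all of N_i.  In the first case the vertex of N_1
   towards it, in the second the vertex of N_3 towards it, has eccentricity
   less than r, contradicting the centrality of v. *)

Section Quadrangulation.
Variables (V : finType) (adj : rel V).
Hypotheses (adj_sym : symmetric adj) (conn : connected_graph adj).

Lemma in_ball0 u x : (x \in ball adj 0 u) = (x == u).
Proof. by rewrite inE. Qed.

Lemma in_ballS k u x :
  (x \in ball adj k.+1 u) = (x \in ball adj k u) || [exists y in ball adj k u, adj y x].
Proof. by rewrite /= !inE. Qed.

Lemma ball_leq k l u x : k <= l -> x \in ball adj k u -> x \in ball adj l u.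
Proof.
elim: l => [|l IHl]; first by rewrite leqn0 => /eqP ->.
rewrite leq_eqVlt => /predU1P [-> //|/IHl x_kl /x_kl x_l].
by rewrite in_ballS x_l.
Qed.

Lemma ballS_adj k u y x : y \in ball adj k u -> adj y x -> x \in ball adj k.+1 u.
Proof. by move=> y_k yx; rewrite in_ballS; apply/orP; right; apply/existsP; exists y; rewrite y_k. Qed.

Lemma ball_trans a b u x y :
  x \in ball adj a u -> y \in ball adj b x -> y \in ball adj (a + b) u.
Proof.
move=> x_a; elim: b y => [|b IHb] y; first by rewrite in_ball0 addn0 => /eqP ->.
rewrite in_ballS => /orP [/IHb|/existsP [z /andP [/IHb z_ab zy]]].
  by apply: ball_leq; rewrite leq_add2l.
by rewrite addnS; apply: ballS_adj z_ab zy.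
Qed.

Lemma ball1_adj x y : adj x y -> y \in ball adj 1 x.
Proof. by apply: ballS_adj; rewrite in_ball0. Qed.

Lemma ball_sym k u x : x \in ball adj k u -> u \in ball adj k x.
Proof.
elim: k x => [|k IHk] x; first by rewrite !in_ball0 eq_sym.
rewrite in_ballS => /orP [/IHk /ball_leq -> //|/existsP [y /andP [/IHk u_ky yx]]].
have x_1y : y \in ball adj 1 x by rewrite ball1_adj // adj_sym.
exact: ball_trans x_1y u_ky.
Qed.

Lemma path_last_ball x p : path adj x p -> last x p \in ball adj (size p) x.
Proof.
elim: p x => [|y p IHp] x /=; first by rewrite in_ball0.
by case/andP=> /ball1_adj y_1 /IHp; exact: ball_trans y_1.
Qed.

Lemma ball_card u x : x \in ball adj #|V|.-1 u.
Proof.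
have /connectP [p up ->] := conn u x.
case: (shortenP up) => q uq q_uniq _.
apply: ball_leq (path_last_ball uq).
by have := max_card (mem (u :: q)); rewrite (card_uniqP q_uniq) /=; lia.
Qed.

(* [dist] is a bounded search, returning the junk value #|V| for an unreachable
   x; connectivity puts every x within radius #|V|.-1. *)
Lemma dist_ball u x : x \in ball adj (dist adj u x) u.
Proof.
have in_iota : has (fun k => x \in ball adj k u) (iota 0 #|V|).
  have V_gt0 : 0 < #|V| by apply/card_gt0P; exists u.
  by apply/hasP; exists #|V|.-1; rewrite ?ball_card // mem_iota; lia.
have lt_find : dist adj u x < #|V| by rewrite -[X in _ < X](size_iota 0) -has_find.
by have := nth_find 0 in_iota; rewrite nth_iota.
Qed.

Lemma dist_leq_ball u x k : (dist adj u x <= k) = (x \in ball adj k u).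
Proof.
apply/idP/idP => [le_k|x_k]; first exact: ball_leq le_k (dist_ball u x).
rewrite leqNgt; apply/negP => lt_k.
have lt_kV : k < #|V|.
  by apply: leq_trans lt_k _; rewrite -[X in _ <= X](size_iota 0) find_size.
by have := before_find 0 lt_k; rewrite nth_iota // add0n x_k.
Qed.

Lemma distxx u : dist adj u u = 0.
Proof. by apply/eqP; rewrite -leqn0 dist_leq_ball in_ball0. Qed.

Lemma distC u x : dist adj u x = dist adj x u.
Proof.
by apply/eqP; rewrite eqn_leq !dist_leq_ball !(ball_sym (dist_ball _ _)).
Qed.

Lemma dist_triangle u x y : dist adj u y <= dist adj u x + dist adj x y.
Proof. by rewrite dist_leq_ball; apply: ball_trans (dist_ball _ _) (dist_ball _ _). Qed.

Lemma dist_adj x y : adj x y -> dist adj x y <= 1.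
Proof. by move/ball1_adj; rewrite -dist_leq_ball. Qed.

Lemma dist_common_neighbour x p q : adj x p -> adj x q -> dist adj p q <= 2.
Proof.
rewrite adj_sym => /dist_adj px /dist_adj xq.
by apply: leq_trans (dist_triangle p x q) _; rewrite -[2]/(1 + 1) leq_add.
Qed.

Lemma dist_parent u x k :
  dist adj u x = k.+1 -> exists2 y, dist adj u y = k & adj y x.
Proof.
move=> ux.
have x_k1 : x \in ball adj k.+1 u by rewrite -dist_leq_ball ux.
have x_k : x \notin ball adj k u by rewrite -dist_leq_ball ux ltnn.
move: x_k1; rewrite in_ballS (negbTE x_k) => /existsP [y /andP [y_k yx]].
exists y => //; apply/eqP; rewrite eqn_leq dist_leq_ball y_k leqNgt /=.
apply: contra x_k => lt_k; rewrite -dist_leq_ball.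
by apply: leq_trans (dist_triangle u y x) _; have := dist_adj yx; lia.
Qed.

Lemma dist_geodesic u y i : i <= dist adj u y ->
  exists2 z, dist adj u z = i & dist adj z y <= dist adj u y - i.
Proof.
move Ek: (dist adj u y) => k; elim: k y Ek => [|k IHk] y uy le_ik.
  by exists y; rewrite ?distxx; lia.
case: (leqP i k) => [le_ik'|lt_ki]; last by exists y; rewrite ?distxx; lia.
have [y' uy' y'y] := dist_parent uy.
have [z uz zy'] := IHk _ uy' le_ik'.
by exists z => //; have := dist_triangle z y' y; have := dist_adj y'y; lia.
Qed.

Definition outward v a : bool :=
  [exists w, adj a w && (dist adj v w == (dist adj v a).+1)].

Lemma outward_ancestor v y i : i < dist adj v y ->
  exists z, [/\ dist adj v z = i, outward v z & dist adj z y <= dist adj v y - i].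
Proof.
move=> lt_iy; have [z' vz' z'y] := dist_geodesic lt_iy.
have [z vz zz'] := dist_parent vz'.
exists z; split => //.
  by apply/existsP; exists z'; rewrite zz' vz vz' eqxx.
by have := dist_triangle z z' y; have := dist_adj zz'; lia.
Qed.

Variable c : V -> bool.
Hypothesis c_proper : forall u w, adj u w -> c u != c w.

Lemma color_dist v x : c x = c v (+) odd (dist adj v x).
Proof.
move Ek: (dist adj v x) => k; elim: k x Ek => [|k IHk] x vx.
  by move/eqP: vx; rewrite addbF -leqn0 dist_leq_ball in_ball0 => /eqP ->.
have [y /IHk cy yx] := dist_parent vx.
by move: (c_proper yx); rewrite cy /=; case: (c x); case: (c v); case: (odd k).
Qed.

Lemma adj_dist v x y : adj x y ->
  dist adj v y = (dist adj v x).+1 \/ dist adj v x = (dist adj v y).+1.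
Proof.
move=> xy; have := dist_triangle v x y; have := dist_triangle v y x.
rewrite (distC y x); have := dist_adj xy.
have : dist adj v x != dist adj v y.
  by apply: contra (c_proper xy) => /eqP vxy; rewrite (color_dist v x) (color_dist v y) vxy.
by move/eqP; lia.
Qed.

Variable rho : V -> V -> V.
Hypotheses (rho_rot : rotation_system adj rho) (rho_quad : quad_faces adj rho).

Lemma adj_rho u w : adj u w -> adj u (rho u w).
Proof. exact: (rho_rot u).1. Qed.

Lemma adj_iter_rho u w k : adj u w -> adj u (iter k (rho u) w).
Proof. by move=> uw; elim: k => //= k; apply: adj_rho. Qed.

(* The face traversed as x -> a -> rho a x -> s -> x. *)
Lemma quad_face_closing x a :
  adj x a -> exists s, [/\ adj (rho a x) s, adj s x & s != a].
Proof.
move=> xa; have [] := rho_quad (xa : dart adj (x, a)).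
rewrite /face_perm /=; set y := rho a x; set s := rho y a => -[sx _].
rewrite !inE => /and4P [_ /norP [_ sa] _ _].
have ay : adj a y by apply: adj_rho; rewrite adj_sym.
have ys : adj y s by apply: adj_rho; rewrite adj_sym.
have sx' : adj s x by rewrite -sx; apply: adj_rho; rewrite adj_sym.
by exists s; rewrite eq_sym.
Qed.

Lemma iter_enter (T : Type) (f : T -> T) (P : pred T) k x :
  ~~ P x -> P (iter k f x) -> exists t, ~~ P (iter t f x) /\ P (iter t.+1 f x).
Proof.
move=> Px; elim: k => [|k IHk] /=; first by move/negP: Px.
by case Pk: (P (iter k f x)) => [/IHk //|]; exists k; rewrite Pk.
Qed.

Variable v : V.

Lemma outward_sibling a : 0 < dist adj v a -> outward v a ->
  exists x s, [/\ adj x a, adj x s, (dist adj v x).+1 = dist adj v a,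
                  dist adj v s = dist adj v a & (s != a) && outward v s].
Proof.
move=> va_gt0 /existsP [w /andP [aw /eqP vw]].
have [x0 vx0 x0a] := dist_parent (esym (prednK va_gt0)).
have ax0 : adj a x0 by rewrite adj_sym.
have [_ [_ /(_ x0 w ax0 aw) [k rho_k]]] := rho_rot a.
have [||t []] := iter_enter (P := fun z => dist adj v z == (dist adj v a).+1)
  (k := k) (f := rho a) (x := x0); first by rewrite vx0; lia.
  by rewrite rho_k vw.
move=> /= vx_ne /eqP vy; set x := iter t (rho a) x0 in vx_ne vy.
have ax : adj a x by apply: adj_iter_rho.
have vx : (dist adj v x).+1 = dist adj v a.
  by have := adj_dist v ax; move/eqP: vx_ne; lia.
rewrite adj_sym in ax; have [s [ys sx sa]] := quad_face_closing ax.
have vs : dist adj v s = dist adj v a.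
  by have := adj_dist v sx; have := adj_dist v ys; lia.
exists x, s; split => //; first by rewrite adj_sym.
by rewrite sa; apply/existsP; exists (rho a x); rewrite adj_sym ys vy vs eqxx.
Qed.

Lemma exists_dist_ecc u : exists y, dist adj u y = ecc adj u.
Proof.
rewrite /ecc; have [|y ->] := eq_bigmax (dist adj u); last by exists y.
by apply/card_gt0P; exists u.
Qed.

Local Notation r := (ecc adj v).

Lemma dist_leq_ecc y : dist adj v y <= r.
Proof. exact: leq_bigmax. Qed.

Lemma exists_outward_level i : i < r -> exists2 a, dist adj v a = i & outward v a.
Proof.
have [y <-] := exists_dist_ecc v => /outward_ancestor [a [va a_out _]].
by exists a.
Qed.

Lemma two_le_card_sphere i : 1 <= i <= r - 1 -> 2 <= #|Nsphere adj v i|.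
Proof.
move=> i_range; have [|a va a_out] := exists_outward_level (i := i); first by lia.
have [|x [s [_ _ _ vs /andP [sa _]]]] := outward_sibling _ a_out; first by lia.
apply: leq_trans (subset_leq_card (A := [set a; s]) _); first by rewrite cards2 eq_sym sa.
by apply/subsetP => z; rewrite !inE => /orP [] /eqP ->; rewrite ?vs va.
Qed.

Hypothesis v_central : central adj v.

(* Such an m has eccentricity < r: it beats v on the levels >= L and is within
   dist v m + L - 1 of the lower ones. *)
Lemma no_shortcut m L : dist adj v m + L <= r ->
  (forall y, L <= dist adj v y -> dist adj m y < dist adj v y) -> False.
Proof.
move=> mL closer; have [y my] := exists_dist_ecc m.
have := v_central m; rewrite -my; have := dist_leq_ecc y.
case: (leqP L (dist adj v y)) => [/closer|lt_yL]; first by lia.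
by have := dist_triangle m v y; rewrite (distC m v); lia.
Qed.

Lemma no_hub_at_level h : 3 <= dist adj v h -> dist adj v h + 3 <= r ->
  (forall z, dist adj v z = dist adj v h -> dist adj h z <= 2) -> False.
Proof.
move=> vh_ge3 vh_le hub; have [m vm mh] := dist_geodesic vh_ge3.
apply: (no_shortcut (m := m) (L := dist adj v h)) => [|y le_hy]; first by lia.
have [z vz zy] := dist_geodesic le_hy; have := hub _ vz.
by have := dist_triangle m h y; have := dist_triangle h z y; lia.
Qed.

Lemma no_parent_of_all_outward x : 0 < dist adj v x -> dist adj v x + 3 <= r ->
  (forall z, dist adj v z = (dist adj v x).+1 -> outward v z -> adj x z) -> False.
Proof.
move=> vx_gt0 vx_le parent; have [u vu ux] := dist_geodesic vx_gt0.
apply: (no_shortcut (m := u) (L := (dist adj v x).+2)) => [|y vy]; first by lia.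
have [z [vz z_out zy]] := outward_ancestor (i := (dist adj v x).+1) vy.
have := dist_adj (parent _ vz z_out).
have := dist_triangle u x y; have := dist_triangle x z y; lia.
Qed.

Lemma no_third_outward x a b d i :
  #|Nsphere adj v i| <= 3 -> 3 <= i -> i + 3 <= r ->
  adj x a -> adj x b -> b != a -> dist adj v a = i -> dist adj v b = i ->
  dist adj v d = i -> outward v d -> d != a -> d != b -> False.
Proof.
move=> small i_ge3 i_le xa xb ba va vb vd d_out da db.
have sphere : Nsphere adj v i = [set a; b; d].
  apply/esym/eqP; rewrite eqEcard; apply/andP; split.
    by apply/subsetP => z; rewrite !inE -orbA => /or3P [] /eqP ->; rewrite ?va ?vb ?vd.
  by rewrite setUC cardsU1 cards2 !inE (negbTE da) (negbTE db) eq_sym ba.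
have [|x' [s [x'd x's _ vs /andP [sd _]]]] := outward_sibling _ d_out.
  by rewrite vd; apply: leq_trans i_ge3.
have : s \in Nsphere adj v i by rewrite inE vs vd.
rewrite sphere !inE (negbTE sd) orbF => s_ab.
apply: (no_hub_at_level (h := s)); rewrite vs vd // => z vz.
have : z \in Nsphere adj v i by rewrite inE vz.
rewrite sphere !inE -orbA => /or3P [] /eqP ->; last exact: dist_common_neighbour x's x'd.
  by case/orP: s_ab => /eqP ->; rewrite ?distxx // (dist_common_neighbour xb xa).
by case/orP: s_ab => /eqP ->; rewrite ?distxx // (dist_common_neighbour xa xb).
Qed.

Lemma four_le_card_sphere i : 3 <= i <= r - 3 -> 4 <= #|Nsphere adj v i|.
Proof.
case/andP=> i_ge3 i_le; have {}i_le : i + 3 <= r by lia.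
rewrite leqNgt ltnS; apply/negP => small.
have [|a va a_out] := exists_outward_level (i := i); first by lia.
have [|x [b [xa xb vx vb /andP [ba b_out]]]] := outward_sibling _ a_out; first by lia.
rewrite va in vx vb.
case: (boolP [exists d, [&& dist adj v d == i, outward v d, d != a & d != b]]).
  case/existsP=> d /and4P [/eqP vd d_out da db].
  exact: (no_third_outward small i_ge3 i_le xa xb ba va vb vd d_out da db).
rewrite negb_exists => /forallP no_other.
apply: (no_parent_of_all_outward (x := x)); [lia | lia | move=> z vz z_out].
move: (no_other z); rewrite vz vx eqxx z_out /=.
by case: eqP => [-> //|_]; case: eqP => [-> //|].
Qed.

End Quadrangulation.

Theorem lemma2p5 (V : finType) (adj : rel V) (rho : V -> V -> V)
  (hQ : quadrangulation adj rho) (v : V) (hv : central adj v) :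
  let r := ecc adj v in
  (forall i, i \in [:: 1; 2; r - 2; r - 1] -> 1 <= i <= r - 1 ->
     2 <= #|Nsphere adj v i|) /\
  (forall i, 3 <= i <= r - 3 -> 4 <= #|Nsphere adj v i|).
Proof.
case: hQ => [[_ adj_sym] [conn [[c c_proper] [rho_rot [_ rho_quad]]]]] r.
split=> [i _|i]; first exact: (two_le_card_sphere adj_sym conn c_proper rho_rot rho_quad).
exact: (four_le_card_sphere adj_sym conn c_proper rho_rot rho_quad hv).
Qed.
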